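(* Let $(X_m)_{m\in[0,\zeta)}$ be a discrete-time (sub-)Markov chain on a countable set $S$ with lifetime $\zeta$, started at $x_0$. Fix $w\in S\setminus\{x_0\}$ and let $T_1=\inf\{n>0:X_n=w\}$, $T_N=\inf\{m>T_{N-1}:X_m=w\}$ ($\inf\emptyset=\infty$). For $N\ge1$ with $\mathbb P[T_N<\infty]>0$, let $LE[0,T_N]$ be the loop erasure of the finite path $(X_0,\ldots,X_{T_N})$. Then the conditional law of $LE[0,T_N]$ given $\{T_N<\infty\}$ equals the conditional law of $LE[0,T_1]$ given $\{T_1<\infty\}$.
   Context: Loop erasure of a finite path $(\xi_0,\ldots,\xi_K)$: set $y_0=\xi_0$; if $y_i$ is defined and $y_i\ne\xi_K$, let $T_i=1+\max\{n\le K:\xi_n=y_i\}$ and $y_{i+1}=\xi_{T_i}$; stop when $y_i=\xi_K$. The loop-erased path is $(y_0,y_1,\ldots)$, a self-avoiding path from $\xi_0$ to $\xi_K$. *)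

From Stdlib Require Import Reals List.
Import ListNotations.
Open Scope R_scope.
Set Implicit Arguments.

Section LE.
Variable St : Type.
Variable eqd : forall x y : St, {x = y} + {x <> y}.

(* The part of l strictly after the last occurrence of x in l
   (only used when x occurs in l). *)
Fixpoint after_last (x : St) (l : list St) : list St :=
  match l with
  | [] => []
  | y :: t => if in_dec eqd x t then after_last x t
              else if eqd x y then t else y :: t
  end.

(* Loop erasure, following the context: y_0 = xi_0; if y_i <> xi_K,
   y_{i+1} = xi_{T_i} where T_i = 1 + last index of y_i; stop when y_i = xi_K. *)
Fixpoint le_fuel (fuel : nat) (l : list St) : list St :=
  match fuel with
  | O => []
  | Datatypes.S f =>
      match l with
      | [] => []
      | x :: t =>
          match after_last x (x :: t) with
          | [] => [x]
          | r => x :: le_fuel f r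
          end
      end
  end.

Definition loop_erasure (l : list St) : list St := le_fuel (length l) l.

(* xi = (X_0,...,X_K) is the path up to T_N with T_N = K < infinity:
   starts at x0, ends at w, and w is visited exactly N times at times n > 0. *)
Definition stopped_at (x0 w : St) (N : nat) (xi : list St) : Prop :=
  exists t, xi = x0 :: t /\ last t x0 = w /\ count_occ eqd t w = N.
End LE.

Fixpoint sumR (l : list R) : R :=
  match l with [] => 0 | a :: t => a + sumR t end.

Fixpoint path_weight (St : Type) (P : St -> St -> R) (xi : list St) : R :=
  match xi with
  | x :: ((y :: _) as t) => P x y * path_weight P t
  | _ => 1
  end.

(* m is the total mass (sum, possibly infinite series of nonnegative terms)
   of the path weights over the set A of finite paths: the supremum of finite
   partial sums over distinct paths in A. *)
Definition has_mass (St : Type) (P : St -> St -> R) (A : list St -> Prop) (m : R)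
  : Prop :=
  is_lub (fun r => exists L : list (list St),
             NoDup L /\ (forall xi, In xi L -> A xi) /\
             r = sumR (map (path_weight P) L)) m.

From Stdlib Require Import Reals List Permutation Lra Lia Wf_nat.
Import ListNotations.
Open Scope R_scope.

(* Everything is reduced to a combinatorial bijection.  Write a path stopped
   at its N-th visit to w as "first part" (up to the first visit) followed by
   N - 1 excursions w -> w.  The map [splice] below rearranges such a pair
   (first part, excursions) into a path stopped at its N-th visit to w with
   the same loop erasure as the first part; it is a bijection onto all such
   paths and it preserves weights (it only permutes the steps).  Hence, for
   every set Q of loop-erased paths, mass(N visits, LE in Q) equals
   mass(1 visit, LE in Q) * E, where E is the total weight of the
   (N-1)-tuples of excursions; taking Q = everything and Q = {gamma} and
   dividing gives the theorem. *)

Section Masses.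
Context {T : Type}.

Lemma sumR_app (l1 l2 : list R) : sumR (l1 ++ l2) = sumR l1 + sumR l2.
Proof. induction l1; simpl; lra. Qed.

Lemma sumR_nonneg (f : T -> R) (L : list T) :
  (forall x, In x L -> 0 <= f x) -> 0 <= sumR (map f L).
Proof.
  induction L as [|a L IH]; simpl; intros H; [lra|].
  assert (0 <= f a) by auto. assert (0 <= sumR (map f L)) by auto. lra.
Qed.

Lemma sumR_incl (f : T -> R) (L K : list T) :
  NoDup L -> incl L K -> (forall x, In x K -> 0 <= f x) ->
  sumR (map f L) <= sumR (map f K).
Proof.
  revert K. induction L as [|a L IH]; intros K HN Hi Hf; simpl.
  - apply sumR_nonneg; auto.
  - inversion HN as [|? ? HaL HL]; subst.
    destruct (in_split a K (Hi a (or_introl eq_refl))) as [l1 [l2 ->]].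
    assert (IHL : sumR (map f L) <= sumR (map f (l1 ++ l2))).
    { apply IH; auto.
      - intros x Hx. assert (Hx' := Hi x (or_intror Hx)).
        rewrite in_app_iff in Hx' |- *. destruct Hx' as [H|[H|H]]; subst; tauto.
      - intros x Hx; apply Hf. rewrite in_app_iff in Hx |- *. simpl; tauto. }
    rewrite map_app, sumR_app in IHL |- *. simpl. lra.
Qed.

Definition partial_sum (wt : T -> R) (A : T -> Prop) (r : R) : Prop :=
  exists L, NoDup L /\ (forall x, In x L -> A x) /\ r = sumR (map wt L).

Definition mass (wt : T -> R) (A : T -> Prop) (m : R) : Prop :=
  is_lub (partial_sum wt A) m.

Lemma partial_sum_nil wt A : partial_sum wt A 0.
Proof. exists []. repeat split; [constructor|intros _ []]. Qed.

Lemma mass_nonneg wt A m : mass wt A m -> 0 <= m.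
Proof. intros [Hub _]. apply Hub, partial_sum_nil. Qed.

Lemma partial_sum_nonneg wt A r :
  (forall x, 0 <= wt x) -> partial_sum wt A r -> 0 <= r.
Proof. intros Hw [L [_ [_ ->]]]. apply sumR_nonneg; auto. Qed.

End Masses.

Lemma mass_transport {T1 T2 : Type} (w1 : T1 -> R) (w2 : T2 -> R)
  (A : T1 -> Prop) (B : T2 -> Prop) (f : T1 -> T2) :
  (forall a, A a -> B (f a)) ->
  (forall b, B b -> exists a, A a /\ f a = b) ->
  (forall a a', A a -> A a' -> f a = f a' -> a = a') ->
  (forall a, A a -> w2 (f a) = w1 a) ->
  forall m, mass w1 A m <-> mass w2 B m.
Proof.
  intros HAB HBA Hinj Hw m.
  assert (Hs : forall r, partial_sum w1 A r <-> partial_sum w2 B r).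
  { intro r; split.
    - intros [L [HN [HL ->]]]. exists (map f L). repeat split.
      + apply FinFun.Injective_map_NoDup_in; auto.
      + intros x Hx. apply in_map_iff in Hx. destruct Hx as [y [<- Hy]]. auto.
      + rewrite map_map. f_equal. apply map_ext_in. intros; symmetry; auto.
    - intros [L [HN [HL ->]]].
      assert (Hpre : exists L', (forall x, In x L' -> A x) /\ map f L' = L).
      { clear HN. induction L as [|b L IH].
        - exists []; split; [intros _ []|reflexivity].
        - destruct IH as [L' [HL' <-]]; [intros; apply HL; right; auto|].
          destruct (HBA b (HL b (or_introl eq_refl))) as [a [Ha <-]].
          exists (a :: L'); split; [intros x [<-|Hx]; auto|reflexivity]. }
      destruct Hpre as [L' [HL' <-]]. exists L'. repeat split; auto.
      + apply (NoDup_map_inv f); auto.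
      + rewrite map_map. f_equal. apply map_ext_in. intros; auto. }
  unfold mass, is_lub, is_upper_bound.
  split; intros [H1 H2]; split; intros.
  all: first [apply H1, Hs; assumption | apply H2; intros; apply H, Hs; assumption].
Qed.

Lemma mass_ext {T : Type} (wt : T -> R) (A B : T -> Prop) m :
  (forall x, A x <-> B x) -> mass wt A m -> mass wt B m.
Proof.
  intros He. apply (mass_transport wt wt A B (fun x => x)); firstorder.
Qed.

(* A bound [s * c <= u] on the elements [s] of [S] passes to the supremum
   (for [c >= 0]); this is how bounds on products of partial sums become
   bounds on products of masses. *)
Lemma lub_scale (S : R -> Prop) m c u :
  is_lub S m -> 0 <= c -> 0 <= u -> (forall s, S s -> s * c <= u) -> m * c <= u.
Proof.
  intros [_ Hleast] Hc Hu Hs.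
  destruct (Req_dec c 0) as [->|Hc0]; [lra|].
  assert (Hm : m <= u / c).
  { apply Hleast. intros s Hs'. apply (Rmult_le_reg_r c); [lra|].
    unfold Rdiv. rewrite Rmult_assoc, Rinv_l, Rmult_1_r by lra. auto. }
  apply (Rmult_le_compat_r c) in Hm; [|lra].
  unfold Rdiv in Hm. rewrite Rmult_assoc, Rinv_l, Rmult_1_r in Hm by lra. exact Hm.
Qed.

Section Product.
Context {T1 T2 : Type}
  (eq1 : forall x y : T1, {x = y} + {x <> y}) (eq2 : forall x y : T2, {x = y} + {x <> y})
  (w1 : T1 -> R) (w2 : T2 -> R) (A : T1 -> Prop) (B : T2 -> Prop)
  (Hw1 : forall a, 0 <= w1 a) (Hw2 : forall b, 0 <= w2 b).

Definition prod_weight (p : T1 * T2) : R := w1 (fst p) * w2 (snd p).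
Definition prod_set (p : T1 * T2) : Prop := A (fst p) /\ B (snd p).

Lemma sumR_list_prod (L1 : list T1) (L2 : list T2) :
  sumR (map prod_weight (list_prod L1 L2)) = sumR (map w1 L1) * sumR (map w2 L2).
Proof.
  induction L1 as [|a L1 IH]; simpl; [lra|].
  rewrite map_app, sumR_app, IH, map_map. unfold prod_weight; simpl.
  enough (sumR (map (fun x => w1 a * w2 x) L2) = w1 a * sumR (map w2 L2)) by lra.
  clear. induction L2; simpl; lra.
Qed.

Lemma partial_sum_mult s1 s2 :
  partial_sum w1 A s1 -> partial_sum w2 B s2 -> partial_sum prod_weight prod_set (s1 * s2).
Proof.
  intros [L1 [N1 [I1 ->]]] [L2 [N2 [I2 ->]]]. exists (list_prod L1 L2).
  split; [|split].
  - clear I1. induction N1 as [|a L1 Ha N1 IH]; simpl; [constructor|].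
    apply NoDup_app; auto.
    + apply FinFun.Injective_map_NoDup; auto. intros x y E; congruence.
    + intros x Hx Hx'. apply in_map_iff in Hx. destruct Hx as [y [<- _]].
      apply in_prod_iff in Hx'. tauto.
  - intros [x y] Hxy. apply in_prod_iff in Hxy. split; apply I1 || apply I2; tauto.
  - symmetry; apply sumR_list_prod.
Qed.

Lemma partial_sum_prod_bound r : partial_sum prod_weight prod_set r ->
  exists s1 s2, partial_sum w1 A s1 /\ partial_sum w2 B s2 /\ r <= s1 * s2.
Proof.
  intros [L [HN [HL ->]]].
  set (K1 := nodup eq1 (map fst L)). set (K2 := nodup eq2 (map snd L)).
  exists (sumR (map w1 K1)), (sumR (map w2 K2)).
  split; [|split].
  - exists K1. repeat split; [apply NoDup_nodup|].
    intros x Hx. unfold K1 in Hx. rewrite nodup_In, in_map_iff in Hx.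
    destruct Hx as [p [<- Hp]]. apply HL; auto.
  - exists K2. repeat split; [apply NoDup_nodup|].
    intros x Hx. unfold K2 in Hx. rewrite nodup_In, in_map_iff in Hx.
    destruct Hx as [p [<- Hp]]. apply HL; auto.
  - rewrite <- sumR_list_prod. apply sumR_incl; auto.
    + intros [x y] Hx. apply in_prod_iff. unfold K1, K2. rewrite !nodup_In.
      split; apply in_map_iff; exists (x, y); auto.
    + intros; unfold prod_weight; apply Rmult_le_pos; auto.
Qed.

Lemma mass_product m1 m2 :
  mass w1 A m1 -> mass w2 B m2 -> mass prod_weight prod_set (m1 * m2).
Proof.
  intros Hm1 Hm2. split.
  - intros r Hr. destruct (partial_sum_prod_bound r Hr) as [s1 [s2 [H1 [H2 Hle]]]].
    assert (0 <= s1) by (apply (partial_sum_nonneg w1 A); auto).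
    assert (0 <= s2) by (apply (partial_sum_nonneg w2 B); auto).
    assert (s1 <= m1) by (apply Hm1; auto). assert (s2 <= m2) by (apply Hm2; auto).
    assert (s1 * s2 <= m1 * m2) by (apply Rmult_le_compat; auto). lra.
  - intros u Hu.
    assert (Hu0 : 0 <= u).
    { apply Hu. rewrite <- (Rmult_0_l 0). apply partial_sum_mult; apply partial_sum_nil. }
    rewrite Rmult_comm. apply (lub_scale _ _ _ _ Hm2); [eapply mass_nonneg; eauto|auto|].
    intros s2 Hs2. rewrite Rmult_comm.
    apply (lub_scale _ _ _ _ Hm1); [apply (partial_sum_nonneg w2 B); auto|auto|].
    intros s1 Hs1. apply Hu, partial_sum_mult; auto.
Qed.

Lemma mass_factor_pos m1 M :
  mass w1 A m1 -> mass prod_weight prod_set M -> 0 < M -> 0 < m1.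
Proof.
  intros Hm1 HM HMpos.
  destruct (Rle_lt_dec m1 0) as [Hle|]; auto. exfalso.
  assert (M <= 0); [|lra].
  apply HM. intros r Hr. destruct (partial_sum_prod_bound r Hr) as [s1 [s2 [H1 [H2 Hr']]]].
  assert (0 <= s1) by (apply (partial_sum_nonneg w1 A); auto).
  assert (s1 <= m1) by (apply Hm1; auto).
  replace s1 with 0 in Hr' by lra. lra.
Qed.

Lemma mass_factor_exists m1 M :
  mass w1 A m1 -> 0 < m1 -> mass prod_weight prod_set M -> exists m2, mass w2 B m2.
Proof.
  intros Hm1 Hpos HM.
  destruct (completeness (partial_sum w2 B)) as [m2 Hm2].
  - exists (M / m1). intros s2 Hs2.
    assert (Hle : m1 * s2 <= M).
    { apply (lub_scale _ _ _ _ Hm1);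
        [apply (partial_sum_nonneg w2 B); auto|eapply mass_nonneg; eauto|].
      intros s1 Hs1. apply HM, partial_sum_mult; auto. }
    apply (Rmult_le_reg_l m1); auto. unfold Rdiv.
    rewrite (Rmult_comm M), <- Rmult_assoc, Rinv_r, Rmult_1_l by lra. exact Hle.
  - exists 0; apply partial_sum_nil.
  - exists m2; exact Hm2.
Qed.

End Product.

Section Occurrences.
Context {St : Type} (eqd : forall x y : St, {x = y} + {x <> y}).

Lemma first_occ (x : St) l : In x l -> exists a b, l = a ++ x :: b /\ ~ In x a.
Proof.
  induction l as [|y l IH]; simpl; [tauto|]. intros H.
  destruct (eqd y x) as [->|Hyx].
  - exists [], l; auto.
  - destruct H as [H|H]; [congruence|]. destruct (IH H) as [a [b [-> Ha]]].
    exists (y :: a), b; split; auto. simpl; intros [H'|H']; auto.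
Qed.

Lemma last_occ (x : St) l : In x l -> exists a b, l = a ++ x :: b /\ ~ In x b.
Proof.
  induction l as [|y l IH]; simpl; [tauto|]. intros H.
  destruct (in_dec eqd x l) as [Hin|Hout].
  - destruct (IH Hin) as [a [b [-> Hb]]]. exists (y :: a), b; auto.
  - destruct H as [<-|H]; [|contradiction]. exists [], l; auto.
Qed.

Lemma split_before (v : St) l : exists c a, l = c ++ a /\ ~ In v c /\ hd v a = v.
Proof.
  induction l as [|x l IH].
  - exists [], []; simpl; auto.
  - destruct IH as [c [a [-> [Hc Ha]]]]. destruct (eqd x v) as [->|Hxv].
    + exists [], (v :: c ++ a); simpl; auto.
    + exists (x :: c), a. simpl; repeat split; auto. intros [H|H]; auto.
Qed.

Lemma uniq_first (x : St) a b a' b' :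
  a ++ x :: b = a' ++ x :: b' -> ~ In x a -> ~ In x a' -> a = a' /\ b = b'.
Proof.
  revert a'. induction a as [|y a IH]; intros [|y' a'] E Ha Ha'; simpl in *.
  - injection E as ->. auto.
  - injection E as -> _. tauto.
  - injection E as <- _. tauto.
  - injection E as <- E. destruct (IH a' E) as [-> ->]; auto.
Qed.

Lemma uniq_last (x : St) a b a' b' :
  a ++ x :: b = a' ++ x :: b' -> ~ In x b -> ~ In x b' -> a = a' /\ b = b'.
Proof.
  intros E Hb Hb'.
  assert (E' : rev b ++ x :: rev a = rev b' ++ x :: rev a').
  { apply (f_equal (@rev St)) in E. rewrite !rev_app_distr in E. simpl in E.
    rewrite <- !app_assoc in E. exact E. }
  apply uniq_first in E'; rewrite <- ?in_rev; auto.
  destruct E' as [E1 E2]. apply (f_equal (@rev St)) in E1, E2.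
  rewrite !rev_involutive in E1, E2. auto.
Qed.

Lemma uniq_before (v : St) c a c' a' :
  c ++ a = c' ++ a' -> ~ In v c -> ~ In v c' -> hd v a = v -> hd v a' = v ->
  c = c' /\ a = a'.
Proof.
  revert c'. induction c as [|x c IH]; intros [|x' c'] E Hc Hc' Ha Ha'; simpl in *.
  - auto.
  - subst a. simpl in Ha. subst. tauto.
  - subst a'. simpl in Ha'. subst. tauto.
  - injection E as <- E. destruct (IH c' E) as [-> ->]; auto.
Qed.

Lemma snoc_cases (a b l : list St) y x :
  a ++ y :: b = l ++ [x] -> (b = [] /\ y = x) \/ exists b', b = b' ++ [x].
Proof.
  destruct b as [|z b'] using rev_ind; intros E.
  - apply app_inj_tail in E. left; split; [auto|apply E].
  - right. rewrite app_comm_cons, app_assoc in E. apply app_inj_tail in E.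
    destruct E as [_ ->]. eauto.
Qed.

Lemma loop_start (v : St) (a0 r : list St) : hd v a0 = v -> exists t, a0 ++ v :: r = v :: t.
Proof. destruct a0 as [|x a1]; simpl; intros H; [|subst x]; eexists; reflexivity. Qed.

Lemma last_visit_split (v : St) (t : list St) :
  exists a0 r, v :: t = a0 ++ v :: r /\ ~ In v r /\ hd v a0 = v.
Proof.
  destruct (last_occ v (v :: t) (or_introl eq_refl)) as [a0 [r [E Hr]]].
  exists a0, r. repeat split; auto.
  destruct a0 as [|x a1]; [reflexivity|]. simpl in E |- *. injection E; auto.
Qed.

Lemma hd_error_split (v : St) (a0 r : list St) : hd v a0 = v -> hd_error (a0 ++ v :: r) = Some v.
Proof. destruct a0; simpl; congruence. Qed.

End Occurrences.

Section LoopErasure.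
Context {St : Type} (eqd : forall x y : St, {x = y} + {x <> y}).

Lemma after_last_eq v a0 B : ~ In v B -> after_last eqd v (a0 ++ v :: B) = B.
Proof.
  intros HB. induction a0 as [|x a0 IH]; simpl.
  - destruct (in_dec eqd v B); [contradiction|]. destruct (eqd v v); congruence.
  - destruct (in_dec eqd v (a0 ++ v :: B)) as [_|Hn]; [exact IH|].
    exfalso; apply Hn, in_or_app; right; left; auto.
Qed.

Lemma after_last_length x l : (length (after_last eqd x l) <= length l)%nat.
Proof.
  induction l as [|y l IH]; simpl; [lia|].
  destruct (in_dec eqd x l); [lia|]. destruct (eqd x y); simpl; lia.
Qed.

Lemma le_fuel_irrelevant n m l : (length l <= n)%nat -> (length l <= m)%nat ->
  le_fuel eqd n l = le_fuel eqd m l.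
Proof.
  revert m l. induction n as [|n IH]; intros [|m] [|x t] Hn Hm; cbn [length] in *;
    try reflexivity; try lia.
  cbn [le_fuel].
  assert (Hl : (length (after_last eqd x (x :: t)) <= length t)%nat).
  { simpl. destruct (in_dec eqd x t); [apply after_last_length|].
    destruct (eqd x x); [simpl; lia|congruence]. }
  destruct (after_last eqd x (x :: t)) as [|y r]; [reflexivity|].
  rewrite (IH m); [reflexivity| |]; simpl in *; lia.
Qed.

Lemma loop_erasure_cons v a0 B : ~ In v B -> B <> [] -> hd v a0 = v ->
  loop_erasure eqd (a0 ++ v :: B) = v :: loop_erasure eqd B.
Proof.
  intros HB Hn Ha0.
  destruct (loop_start v a0 B Ha0) as [t Et]. unfold loop_erasure. rewrite Et. cbn [length le_fuel].
  rewrite <- Et, after_last_eq by auto. destruct B as [|y B]; [congruence|].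
  f_equal. apply le_fuel_irrelevant; auto.
  apply (f_equal (@length St)) in Et. rewrite length_app in Et. simpl in *. lia.
Qed.

Lemma loop_erasure_last x m : (exists a0, x :: m = a0 ++ [x]) -> loop_erasure eqd (x :: m) = [x].
Proof.
  intros [a0 E]. unfold loop_erasure. cbn [length le_fuel].
  rewrite E at 1. rewrite after_last_eq by (intros []). reflexivity.
Qed.

End LoopErasure.

Section Splice.
Context {St : Type} (eqd : forall x y : St, {x = y} + {x <> y}) (w : St).

(* A piece of path visiting [w] exactly once, at its end: the path up to its
   first visit to [w], or one excursion from [w] back to [w] (without the
   initial [w]). *)
Definition wseg (l : list St) : Prop := exists a, l = a ++ [w] /\ ~ In w a.

Definition ends_w (l : list St) : Prop := l = [] \/ exists B, l = B ++ [w].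

Definition avoids (v : St) (es : list (list St)) : Prop :=
  forall e, In e es -> ~ In v e.

Lemma wseg_single : wseg [w].
Proof. exists []. simpl; auto. Qed.

Lemma wseg_nil : ~ wseg [].
Proof. intros [a [E _]]. destruct a; discriminate. Qed.

Lemma wseg_w t : wseg (w :: t) -> t = [].
Proof.
  intros [[|y a] [E Ha]]; simpl in E.
  - injection E as ->. reflexivity.
  - injection E as -> _. exfalso; apply Ha; left; auto.
Qed.

Lemma wseg_suffix a0 v r : wseg (a0 ++ v :: r) -> v <> w -> wseg r /\ ~ In w a0.
Proof.
  intros [a [E Ha]] Hv.
  destruct (snoc_cases _ _ _ _ _ E) as [[_ ->]|[b ->]]; [congruence|].
  rewrite app_comm_cons, app_assoc in E. apply app_inj_tail in E. destruct E as [<- _].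
  split.
  - exists b. split; [reflexivity|]. intro H; apply Ha, in_or_app; right; right; exact H.
  - intro H; apply Ha, in_or_app; left; exact H.
Qed.

Lemma wseg_prefix a0 v r : wseg r -> v <> w -> ~ In w a0 -> wseg (a0 ++ v :: r).
Proof.
  intros [a [-> Ha]] Hv Ha0. exists (a0 ++ v :: a). split.
  - rewrite <- app_assoc. reflexivity.
  - rewrite in_app_iff; simpl. intuition.
Qed.

Lemma concat_ends es : Forall wseg es -> ends_w (concat es).
Proof.
  induction 1 as [|e es He _ IH]; simpl; [left; auto|].
  right. destruct He as [a [-> _]]. destruct IH as [-> | [B ->]].
  - exists a; rewrite app_nil_r; auto.
  - exists (a ++ [w] ++ B); rewrite <- !app_assoc; auto.
Qed.

Lemma concat_inj es es' :
  Forall wseg es -> Forall wseg es' -> concat es = concat es' -> es = es'.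
Proof.
  intros H. revert es'. induction H as [|e es He _ IH]; intros es' H' E.
  { destruct H' as [|e' es' [a' [-> _]] _]; [auto|]. destruct a'; discriminate. }
  destruct He as [a [-> Ha]].
  destruct H' as [|e' es' [a' [-> Ha']] Hes']; simpl in E; [destruct a; discriminate|].
  rewrite <- !app_assoc in E. simpl in E.
  destruct (uniq_first _ _ _ _ _ E Ha Ha') as [-> E2]. f_equal. auto.
Qed.

Lemma excursion_decomposition m : ends_w m -> exists es, Forall wseg es /\ concat es = m.
Proof.
  induction m as [m IH] using (induction_ltof1 _ (@length St)); unfold ltof in IH.
  intros [->|[B ->]]; [exists []; auto|].
  assert (Hi : In w (B ++ [w])) by (apply in_or_app; right; left; auto).
  destruct (first_occ eqd w _ Hi) as [a [b [Eab Ha]]].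
  assert (Hb : ends_w b).
  { destruct (snoc_cases _ _ _ _ _ (eq_sym Eab)) as [[-> _]|[b' ->]]; [left|right]; eauto. }
  destruct (IH b) as [es [Hes Ec]]; [rewrite Eab, length_app; simpl; lia|exact Hb|].
  exists ((a ++ [w]) :: es). split.
  - constructor; auto. exists a; auto.
  - simpl. rewrite Ec, Eab, <- app_assoc. reflexivity.
Qed.

Lemma ends_split M1 M2 z1 z2 : ends_w M1 -> ends_w M2 -> ~ In w z1 -> ~ In w z2 ->
  M1 ++ z1 = M2 ++ z2 -> M1 = M2 /\ z1 = z2.
Proof.
  intros [->|[B1 ->]] [->|[B2 ->]] H1 H2 E; simpl in E; auto.
  - exfalso. apply H1. rewrite E, !in_app_iff; simpl; tauto.
  - exfalso. apply H2. rewrite <- E, !in_app_iff; simpl; tauto.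
  - rewrite <- !app_assoc in E. simpl in E.
    destruct (uniq_last _ _ _ _ _ E H1 H2) as [-> ->]. auto.
Qed.

Fixpoint split_first (v : St) (e : list St) : list St * list St :=
  match e with
  | [] => ([], [])
  | x :: t => if eqd x v then ([], t) else let (c, d) := split_first v t in (x :: c, d)
  end.

Fixpoint split_last (v : St) (l : list St) : list St * list St :=
  match l with
  | [] => ([], [])
  | x :: t => if in_dec eqd v t then let (a, r) := split_last v t in (x :: a, r)
              else ([], t)
  end.

Lemma split_first_eq v c d : ~ In v c -> split_first v (c ++ v :: d) = (c, d).
Proof.
  induction c as [|x c IH]; simpl; intros Hc.
  - destruct (eqd v v); congruence.
  - destruct (eqd x v) as [->|_]; [tauto|]. rewrite IH; auto.
Qed.

Lemma split_last_eq v a r : ~ In v r -> split_last v (a ++ v :: r) = (a, r).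
Proof.
  induction a as [|x a IH]; simpl; intros Hr.
  - destruct (in_dec eqd v r); tauto.
  - destruct (in_dec eqd v (a ++ v :: r)) as [_|Hn].
    + rewrite IH; auto.
    + exfalso; apply Hn, in_or_app; right; left; auto.
Qed.

Lemma split_last_length v l : (length (snd (split_last v l)) <= pred (length l))%nat.
Proof.
  induction l as [|x l IH]; simpl; [lia|].
  destruct (in_dec eqd v l); [destruct (split_last v l) as [a r]; simpl in *|simpl]; lia.
Qed.

Fixpoint find_visit (v : St) (es : list (list St))
  : option (list (list St) * list St * list St * list (list St)) :=
  match es with
  | [] => None
  | e :: es' =>
      if in_dec eqd v e then let (c, d) := split_first v e in Some ([], c, d, es')
      else match find_visit v es' with
           | Some (pre, c, d, post) => Some (e :: pre, c, d, post)
           | None => None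
           end
  end.

Lemma find_visit_None v es : find_visit v es = None <-> avoids v es.
Proof.
  unfold avoids. induction es as [|e es IH]; simpl; [split; tauto|].
  destruct (in_dec eqd v e) as [Hin|Hout].
  - destruct (split_first v e). split; [discriminate|].
    intros H; exfalso; exact (H e (or_introl eq_refl) Hin).
  - destruct (find_visit v es) as [[[[pre c] d] post]|].
    + split; [discriminate|]. intros H.
      assert (Hs : Some (pre, c, d, post) = None) by (apply IH; auto). discriminate.
    + split; [|reflexivity]. intros _ e' [<-|He']; [exact Hout|]. apply IH; auto.
Qed.

Lemma find_visit_Some v es pre c d post :
  find_visit v es = Some (pre, c, d, post) <->
  es = pre ++ (c ++ v :: d) :: post /\ avoids v pre /\ ~ In v c.
Proof.
  unfold avoids. split.
  - revert pre. induction es as [|e es IH]; simpl; intros pre; [discriminate|].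
    destruct (in_dec eqd v e) as [Hin|Hout].
    + destruct (first_occ eqd v e Hin) as [c0 [d0 [-> Hc0]]].
      rewrite split_first_eq by auto. intros H; injection H as <- <- <- <-.
      simpl; repeat split; auto.
    + destruct (find_visit v es) as [[[[pre0 c0] d0] post0]|]; [|discriminate].
      intros H; injection H as <- <- <- <-. destruct (IH pre0 eq_refl) as [-> [H1 H2]].
      simpl; repeat split; auto. intros e' [<-|He']; auto.
  - intros [-> [Hpre Hc]]. induction pre as [|e pre IH]; simpl.
    + destruct (in_dec eqd v (c ++ v :: d)) as [_|Hn].
      * rewrite split_first_eq; auto.
      * exfalso; apply Hn, in_or_app; right; left; auto.
    + destruct (in_dec eqd v e) as [Hin|_]; [exfalso; apply (Hpre e); simpl; auto|].
      rewrite IH; auto. intros e' He'; apply Hpre; right; auto.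
Qed.

(* The elementary rearrangement.  [a0 ++ [v]] is the part of a path up to its
   last visit to [v] (so [a0] is empty or starts at [v]). *)
Definition reroute (v : St) (a0 : list St) (es : list (list St)) : list St * list (list St) :=
  match find_visit v es with
  | None => (a0, es)
  | Some (pre, c, d, post) => (v :: d ++ concat post ++ c ++ a0, pre)
  end.

Lemma reroute_cases v a0 es L pre : reroute v a0 es = (L, pre) ->
  (avoids v es /\ L = a0 /\ pre = es) \/
  (exists c d post, es = pre ++ (c ++ v :: d) :: post /\ avoids v pre /\ ~ In v c /\
     L = v :: d ++ concat post ++ c ++ a0).
Proof.
  unfold reroute. destruct (find_visit v es) as [[[[pre0 c] d] post]|] eqn:Ef;
    intros H; injection H as <- <-.
  - right. apply find_visit_Some in Ef. destruct Ef as [-> [H1 H2]]. exists c, d, post; auto.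
  - left. apply find_visit_None in Ef. auto.
Qed.

Lemma reroute_none v a0 es : avoids v es -> reroute v a0 es = (a0, es).
Proof. unfold reroute. intros H. apply find_visit_None in H. rewrite H. reflexivity. Qed.

Lemma reroute_hit v a0 pre c d post : avoids v pre -> ~ In v c ->
  reroute v a0 (pre ++ (c ++ v :: d) :: post) = (v :: d ++ concat post ++ c ++ a0, pre).
Proof.
  intros Hpre Hc. unfold reroute.
  rewrite (proj2 (find_visit_Some v _ pre c d post)) by auto. reflexivity.
Qed.

Lemma reroute_shape v a0 es L pre : reroute v a0 es = (L, pre) -> hd v a0 = v ->
  hd v L = v /\ avoids v pre /\
  exists moved, es = pre ++ moved /\ Permutation L (a0 ++ concat moved).
Proof.
  intros H Ha0.
  destruct (reroute_cases _ _ _ _ _ H) as [[Hes [-> ->]]|[c [d [post [-> [Hpre [_ ->]]]]]]].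
  - repeat split; auto. exists []. rewrite !app_nil_r. auto.
  - repeat split; auto. exists ((c ++ v :: d) :: post). split; [reflexivity|].
    apply (Permutation_count_occ eqd). intros x. simpl.
    rewrite !count_occ_app. simpl. rewrite ?count_occ_app. destruct (eqd v x); lia.
Qed.

Lemma reroute_inj v a0 es a0' es' : v <> w ->
  hd v a0 = v -> hd v a0' = v -> ~ In w a0 -> ~ In w a0' ->
  Forall wseg es -> Forall wseg es' ->
  reroute v a0 es = reroute v a0' es' -> a0 = a0' /\ es = es'.
Proof.
  intros Hv H0 H0' Hw Hw' Hes Hes' E.
  revert E. destruct (reroute v a0' es') as [L pre] eqn:E'. intros E.
  (* a moved excursion [c ++ v :: d] has [d = d0 ++ [w]], so then [L] visits
     [w] while [a0] does not *)
  assert (Hhit : forall c d post, Forall wseg (pre ++ (c ++ v :: d) :: post) ->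
            exists d0, d = d0 ++ [w] /\ ~ In w d0 /\ ~ In w c /\ Forall wseg post).
  { intros c d post Hf. apply Forall_app in Hf. destruct Hf as [_ Hf].
    inversion Hf as [|? ? Hse Hpost].
    destruct (wseg_suffix _ _ _ Hse Hv) as [[d0 [-> Hd0]] Hc]. exists d0; auto. }
  destruct (reroute_cases _ _ _ _ _ E) as [[_ [-> ->]]|[c [d [post [-> [_ [Hc ->]]]]]]];
  destruct (reroute_cases _ _ _ _ _ E') as [[_ [E1 ->]]|[c' [d' [post' [-> [_ [Hc' E1]]]]]]].
  - auto.
  - destruct (Hhit _ _ _ Hes') as [d0 [-> _]]. exfalso. apply Hw.
    rewrite E1. right. rewrite !in_app_iff; simpl; tauto.
  - destruct (Hhit _ _ _ Hes) as [d0 [-> _]]. exfalso. apply Hw'.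
    rewrite <- E1. right. rewrite !in_app_iff; simpl; tauto.
  - destruct (Hhit _ _ _ Hes) as [d0 [-> [Hd0 [Hwc Hpost]]]].
    destruct (Hhit _ _ _ Hes') as [d0' [-> [Hd0' [Hwc' Hpost']]]].
    injection E1 as E1. rewrite <- !app_assoc in E1. simpl in E1.
    destruct (uniq_first _ _ _ _ _ E1 Hd0 Hd0') as [<- E2].
    assert (Hca : forall c0 a, ~ In w c0 -> ~ In w a -> ~ In w (c0 ++ a))
      by (intros; rewrite in_app_iff; tauto).
    destruct (ends_split _ _ _ _ (concat_ends _ Hpost) (concat_ends _ Hpost') (Hca _ _ Hwc Hw)
                (Hca _ _ Hwc' Hw') E2) as [Ep Eca].
    apply concat_inj in Ep; auto. subst post'.
    destruct (uniq_before _ _ _ _ _ Eca Hc Hc' H0 H0') as [<- <-]. auto.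
Qed.

Lemma reroute_surj v L pre : v <> w -> hd v L = v -> avoids v pre -> Forall wseg pre ->
  exists a0 es, hd v a0 = v /\ ~ In w a0 /\ Forall wseg es /\ reroute v a0 es = (L, pre).
Proof.
  intros Hv HL Hpre Hfpre.
  destruct (in_dec eqd w L) as [HwL|HwL]; [|exists L, pre; rewrite reroute_none; auto].
  destruct L as [|x L']; [destruct HwL|]. simpl in HL. subst x.
  destruct HwL as [->|HwL']; [congruence|].
  destruct (first_occ eqd w L' HwL') as [d0 [u1 [-> Hd0]]].
  assert (HM : exists M u2, u1 = M ++ u2 /\ ends_w M /\ ~ In w u2).
  { destruct (in_dec eqd w u1) as [Hin|Hout].
    - destruct (last_occ eqd w u1 Hin) as [m0 [u2 [-> Hu]]]. exists (m0 ++ [w]), u2.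
      rewrite <- app_assoc. repeat split; auto. right; eauto.
    - exists [], u1. repeat split; auto. left; auto. }
  destruct HM as [M [u2 [-> [HM Hu2]]]].
  destruct (split_before eqd v u2) as [c [a0 [-> [Hc Ha0]]]].
  destruct (excursion_decomposition M HM) as [post [Hpost <-]].
  exists a0, (pre ++ (c ++ v :: d0 ++ [w]) :: post).
  rewrite in_app_iff in Hu2. repeat split; auto.
  - apply Forall_app; split; auto. constructor; auto. exists (c ++ v :: d0).
    rewrite <- app_assoc. split; [reflexivity|]. rewrite in_app_iff; simpl; intuition.
  - rewrite reroute_hit by auto. rewrite <- !app_assoc. reflexivity.
Qed.

(* The splicing map: given a path [xi] from its start to its first visit to
   [w] and a list [es] of excursions from [w], process the vertices [v] of the
   loop erasure of [xi] in order, applying [reroute] at each of them; at [w]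
   the remaining excursions are appended. *)
Fixpoint splice_fuel (n : nat) (xi : list St) (es : list (list St)) : list St :=
  match n with
  | O => []
  | S n' =>
      match xi with
      | [] => []
      | v :: _ =>
          if eqd v w then xi ++ concat es
          else let (a0, r) := split_last v xi in
               let (L, pre) := reroute v a0 es in
               L ++ v :: splice_fuel n' r pre
      end
  end.

Definition splice (xi : list St) (es : list (list St)) : list St :=
  splice_fuel (length xi) xi es.

Lemma splice_fuel_irrelevant n m xi es :
  (length xi <= n)%nat -> (length xi <= m)%nat -> splice_fuel n xi es = splice_fuel m xi es.
Proof.
  revert m xi es. induction n as [|n IH]; intros [|m] xi es Hn Hm;
    destruct xi as [|v t]; cbn [length] in *; try reflexivity; try lia.
  cbn [splice_fuel]. destruct (eqd v w); [reflexivity|].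
  pose proof (split_last_length v (v :: t)) as Hr.
  destruct (split_last v (v :: t)) as [a0 r]. destruct (reroute v a0 es) as [L pre].
  simpl in Hr. rewrite (IH m) by lia. reflexivity.
Qed.

Lemma splice_fuel_enough n xi es : (length xi <= n)%nat -> splice_fuel n xi es = splice xi es.
Proof. intros Hn. apply splice_fuel_irrelevant; auto. Qed.

Lemma splice_w t es : splice (w :: t) es = w :: t ++ concat es.
Proof. unfold splice. simpl. destruct (eqd w w); congruence. Qed.

Lemma splice_step v a0 r es : v <> w -> ~ In v r -> hd v a0 = v ->
  splice (a0 ++ v :: r) es =
  let (L, pre) := reroute v a0 es in L ++ v :: splice r pre.
Proof.
  intros Hv Hr Ha0.
  destruct (loop_start v a0 r Ha0) as [t Et].
  unfold splice at 1. rewrite Et. cbn [length splice_fuel].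
  destruct (eqd v w) as [|_]; [congruence|]. rewrite <- Et, split_last_eq by auto.
  destruct (reroute v a0 es) as [L pre]. rewrite splice_fuel_enough; [reflexivity|].
  apply (f_equal (@length St)) in Et. rewrite length_app in Et. simpl in Et. lia.
Qed.

Lemma wseg_ind (Q : list St -> Prop) :
  Q [w] ->
  (forall v a0 r, v <> w -> ~ In v r -> hd v a0 = v -> ~ In w a0 -> wseg r ->
     Q r -> Q (a0 ++ v :: r)) ->
  forall xi, wseg xi -> Q xi.
Proof.
  intros Hw Hstep xi.
  induction xi as [xi IH] using (induction_ltof1 _ (@length St)); unfold ltof in IH.
  intros Hs. destruct xi as [|v t]; [destruct (wseg_nil Hs)|].
  destruct (eqd v w) as [->|Hv]; [rewrite (wseg_w _ Hs); exact Hw|].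
  destruct (last_visit_split eqd v t) as [a0 [r [E [Hr Hhd]]]].
  rewrite E in Hs |- *. destruct (wseg_suffix _ _ _ Hs Hv) as [Hsr Ha0].
  apply Hstep; auto. apply IH; auto. rewrite E, length_app. simpl. lia.
Qed.

Lemma splice_perm xi es : wseg xi -> Permutation (splice xi es) (xi ++ concat es).
Proof.
  intros Hs. revert es. induction Hs as [|v a0 r Hv Hr Ha0 _ _ IH] using wseg_ind.
  - intros es. rewrite splice_w. reflexivity.
  - intros es. rewrite splice_step by auto.
    destruct (reroute v a0 es) as [L pre] eqn:E.
    destruct (reroute_shape _ _ _ _ _ E Ha0) as [_ [_ [moved [-> HL]]]].
    rewrite concat_app, <- !app_assoc. simpl.
    rewrite HL, <- app_assoc. apply Permutation_app_head.
    rewrite (IH pre), app_assoc, app_comm_cons. apply Permutation_app_comm.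
Qed.

Lemma splice_head xi es : wseg xi -> hd_error (splice xi es) = hd_error xi.
Proof.
  intros Hs. destruct Hs as [|v a0 r Hv Hr Ha0 _ _ _] using wseg_ind.
  - rewrite splice_w. reflexivity.
  - rewrite splice_step by auto. destruct (reroute v a0 es) as [L pre] eqn:E.
    destruct (reroute_shape _ _ _ _ _ E Ha0) as [HL _].
    rewrite !hd_error_split; auto.
Qed.

Lemma splice_ends xi es : wseg xi -> Forall wseg es -> exists B, splice xi es = B ++ [w].
Proof.
  intros Hs. revert es. induction Hs as [|v a0 r Hv Hr Ha0 _ _ IH] using wseg_ind; intros es Hes.
  - rewrite splice_w. destruct (concat_ends _ Hes) as [->|[B ->]].
    + exists []; reflexivity.
    + exists (w :: B); reflexivity.
  - rewrite splice_step by auto. destruct (reroute v a0 es) as [L pre] eqn:E.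
    destruct (reroute_shape _ _ _ _ _ E Ha0) as [_ [_ [moved [-> _]]]].
    apply Forall_app in Hes. destruct (IH pre (proj1 Hes)) as [B ->].
    exists (L ++ v :: B). rewrite <- app_assoc. reflexivity.
Qed.

Lemma not_in_splice v xi es : wseg xi -> ~ In v (splice xi es) <-> ~ In v xi /\ avoids v es.
Proof.
  intros Hs. unfold avoids.
  split; intros H; [split; [intros Hin|intros e He Hin]|intros Hin]; [apply H..|].
  - apply (Permutation_in _ (Permutation_sym (splice_perm xi es Hs))), in_app_iff. auto.
  - apply (Permutation_in _ (Permutation_sym (splice_perm xi es Hs))), in_app_iff.
    right. apply in_concat. eauto.
  - apply (Permutation_in _ (splice_perm xi es Hs)), in_app_iff in Hin.
    destruct Hin as [Hin|Hin]; [tauto|]. apply in_concat in Hin.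
    destruct Hin as [e [He Hin]]. exact (proj2 H e He Hin).
Qed.

Lemma loop_erasure_splice xi es : wseg xi -> Forall wseg es ->
  loop_erasure eqd (splice xi es) = loop_erasure eqd xi.
Proof.
  intros Hs. revert es. induction Hs as [|v a0 r Hv Hr Ha0 _ Hsr IH] using wseg_ind; intros es Hes.
  - rewrite splice_w. cbn [app]. rewrite !loop_erasure_last; [reflexivity|exists []; reflexivity|].
    destruct (concat_ends _ Hes) as [->|[B ->]]; [exists []|exists (w :: B)]; reflexivity.
  - rewrite splice_step by auto. destruct (reroute v a0 es) as [L pre] eqn:E.
    destruct (reroute_shape _ _ _ _ _ E Ha0) as [HL [Hpre [moved [-> _]]]].
    apply Forall_app in Hes. destruct Hes as [Hes _].
    assert (Hvs : ~ In v (splice r pre)) by (apply not_in_splice; auto).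
    assert (Hne : forall l, (exists B, l = B ++ [w]) -> l <> [])
      by (intros l [B ->] Hl; destruct B; discriminate).
    rewrite !loop_erasure_cons, IH; auto.
    + apply Hne. destruct Hsr as [a [-> _]]. eauto.
    + apply Hne, splice_ends; auto.
Qed.

Lemma splice_inj xi xi' es es' : wseg xi -> wseg xi' -> Forall wseg es -> Forall wseg es' ->
  splice xi es = splice xi' es' -> xi = xi' /\ es = es'.
Proof.
  intros Hs Hs' Hes Hes' E.
  assert (Hhd : hd_error xi = hd_error xi')
    by (rewrite <- (splice_head xi es), <- (splice_head xi' es'), E by auto; reflexivity).
  revert xi' es es' Hs' Hes Hes' E Hhd.
  induction Hs as [|v a0 r Hv Hr Ha0 Hwa0 Hsr IH] using wseg_ind;
    intros xi' es es' Hs' Hes Hes' E Hhd;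
    destruct Hs' as [|v' a0' r' Hv' Hr' Ha0' Hwa0' Hsr' _] using wseg_ind;
    rewrite ?hd_error_split in Hhd by auto; cbn in Hhd.
  - rewrite !splice_w in E. injection E as E. split; [reflexivity|]. apply concat_inj; auto.
  - injection Hhd; congruence.
  - injection Hhd; congruence.
  - injection Hhd as <-. rewrite !splice_step in E by auto.
    destruct (reroute v a0 es) as [L pre] eqn:E1. destruct (reroute v a0' es') as [L' pre'] eqn:E2.
    destruct (reroute_shape _ _ _ _ _ E1 Ha0) as [_ [Hpre [moved [Ees _]]]].
    destruct (reroute_shape _ _ _ _ _ E2 Ha0') as [_ [Hpre' [moved' [Ees' _]]]].
    assert (Hf : Forall wseg pre) by (rewrite Ees in Hes; apply Forall_app in Hes; tauto).
    assert (Hf' : Forall wseg pre') by (rewrite Ees' in Hes'; apply Forall_app in Hes'; tauto).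
    (* [v] is last visited at the same place on both sides *)
    destruct (uniq_last _ _ _ _ _ E) as [<- ES]; try (apply not_in_splice; auto).
    destruct (IH r' pre pre' Hsr' Hf Hf' ES) as [<- <-].
    { rewrite <- (splice_head r pre), ES, splice_head by auto. reflexivity. }
    rewrite <- E2 in E1.
    destruct (reroute_inj _ _ _ _ _ Hv Ha0 Ha0' Hwa0 Hwa0' Hes Hes' E1) as [<- <-]. auto.
Qed.

Lemma splice_surj xi0 : (exists B, xi0 = B ++ [w]) ->
  exists xi es, wseg xi /\ Forall wseg es /\ hd_error xi = hd_error xi0 /\ splice xi es = xi0.
Proof.
  induction xi0 as [xi0 IH] using (induction_ltof1 _ (@length St)); unfold ltof in IH.
  intros [B EB]. destruct xi0 as [|v t]; [destruct B; discriminate|].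
  destruct (eqd v w) as [->|Hv].
  - assert (Ht : ends_w t).
    { destruct B as [|b B']; simpl in EB; [left|right; exists B']; congruence. }
    destruct (excursion_decomposition t Ht) as [es [Hes Ec]].
    exists [w], es. repeat split; auto.
    + exact wseg_single.
    + rewrite splice_w, Ec. reflexivity.
  - destruct (last_visit_split eqd v t) as [L [r [E [Hr HL]]]]. rewrite E in EB |- *.
    destruct (snoc_cases _ _ _ _ _ EB) as [[_ ->]|Hre]; [congruence|].
    destruct (IH r) as [xr [pre [Hsxr [Hpre [_ Hsp]]]]]; auto.
    { rewrite E, length_app. simpl. lia. }
    assert (Havoid : ~ In v xr /\ avoids v pre) by (apply not_in_splice; auto; rewrite Hsp; auto).
    destruct Havoid as [Hvx Hvp].
    destruct (reroute_surj v L pre Hv HL Hvp Hpre) as [a0 [es [Ha0 [Hwa0 [Hes Er]]]]].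
    exists (a0 ++ v :: xr), es. repeat split; auto.
    + apply wseg_prefix; auto.
    + rewrite !hd_error_split; auto.
    + rewrite splice_step, Er, Hsp by auto. reflexivity.
Qed.

Section Weights.
Context (P : St -> St -> R).

Fixpoint excursions_weight (es : list (list St)) : R :=
  match es with
  | [] => 1
  | e :: es' => path_weight P (w :: e) * excursions_weight es'
  end.

Lemma excursions_weight_app es es' :
  excursions_weight (es ++ es') = excursions_weight es * excursions_weight es'.
Proof. induction es as [|e es IH]; simpl; [ring|rewrite IH; ring]. Qed.

Lemma path_weight_split a (y : St) b :
  path_weight P (a ++ y :: b) = path_weight P (a ++ [y]) * path_weight P (y :: b).
Proof.
  induction a as [|x [|z a] IH]; simpl in *; [ring|ring|]. rewrite IH. ring.
Qed.

Lemma path_weight_split_cons (x : St) a y b :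
  path_weight P (x :: a ++ y :: b) = path_weight P (x :: a ++ [y]) * path_weight P (y :: b).
Proof. exact (path_weight_split (x :: a) y b). Qed.

Lemma path_weight_concat es b : Forall wseg es ->
  path_weight P (w :: concat es ++ b) = excursions_weight es * path_weight P (w :: b).
Proof.
  induction 1 as [|e es [a [-> _]] _ IH]; cbn [concat excursions_weight app]; [ring|].
  rewrite <- !app_assoc. cbn [app]. rewrite path_weight_split_cons, IH. ring.
Qed.

(* The rearrangement only reorders the steps of the path and excursions. *)
Lemma reroute_weight v a0 es L pre : v <> w -> hd v a0 = v -> Forall wseg es ->
  reroute v a0 es = (L, pre) -> forall a z,
  path_weight P (a ++ L ++ v :: z) * excursions_weight pre =
  path_weight P (a ++ a0 ++ v :: z) * excursions_weight es.
Proof.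
  intros Hv Ha0 Hes E a z.
  destruct (reroute_cases _ _ _ _ _ E) as [[_ [-> ->]]|[c [d [post [-> [_ [_ ->]]]]]]];
    [reflexivity|].
  apply Forall_app in Hes. destruct Hes as [_ Hes]. inversion Hes as [|? ? Hse Hpost].
  destruct (wseg_suffix _ _ _ Hse Hv) as [[d0 [-> _]] _].
  destruct (loop_start v a0 z Ha0) as [y Ey].
  replace (a ++ (v :: (d0 ++ [w]) ++ concat post ++ c ++ a0) ++ v :: z)
    with (a ++ v :: d0 ++ w :: concat post ++ c ++ v :: y)
    by (rewrite <- Ey; simpl; rewrite <- !app_assoc; reflexivity).
  rewrite Ey, excursions_weight_app. cbn [excursions_weight].
  rewrite (path_weight_split a v y), (path_weight_split a v (d0 ++ _)).
  rewrite path_weight_split_cons, path_weight_concat by auto.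
  rewrite (path_weight_split_cons w c v y), (path_weight_split_cons w c v (d0 ++ [w])). ring.
Qed.

Lemma splice_weight xi es : wseg xi -> Forall wseg es -> forall a,
  path_weight P (a ++ splice xi es) = path_weight P (a ++ xi) * excursions_weight es.
Proof.
  intros Hs. revert es. induction Hs as [|v a0 r Hv Hr Ha0 _ _ IH] using wseg_ind; intros es Hes a.
  - rewrite splice_w, path_weight_split. cbn [app].
    rewrite <- (app_nil_r (concat es)), path_weight_concat by auto. simpl. ring.
  - rewrite splice_step by auto. destruct (reroute v a0 es) as [L pre] eqn:E.
    destruct (reroute_shape _ _ _ _ _ E Ha0) as [_ [_ [moved [Ees _]]]].
    assert (Hpre : Forall wseg pre) by (rewrite Ees in Hes; apply Forall_app in Hes; tauto).
    replace (a ++ L ++ v :: splice r pre) with ((a ++ L ++ [v]) ++ splice r pre)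
      by (rewrite <- !app_assoc; reflexivity).
    rewrite IH, <- !app_assoc by auto. simpl.
    apply (reroute_weight v a0 es L pre); auto.
Qed.
End Weights.

End Splice.

Section Visits.
Context {St : Type} (eqd : forall x y : St, {x = y} + {x <> y}) (w : St).

Lemma count_wseg l : wseg w l -> count_occ eqd l w = 1%nat.
Proof.
  intros [a [-> Ha]]. rewrite count_occ_app, (proj1 (count_occ_not_In eqd a w) Ha).
  simpl. destruct (eqd w w); congruence.
Qed.

Lemma wseg_of_count l : (exists B, l = B ++ [w]) -> count_occ eqd l w = 1%nat -> wseg w l.
Proof.
  intros [B ->] Hc. exists B; split; [reflexivity|].
  rewrite count_occ_app in Hc. simpl in Hc. destruct (eqd w w); [|congruence].
  apply (count_occ_not_In eqd). lia.
Qed.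

Lemma count_concat es : Forall (wseg w) es -> count_occ eqd (concat es) w = length es.
Proof.
  induction 1 as [|e es He _ IH]; simpl; [reflexivity|].
  rewrite count_occ_app, count_wseg, IH by auto. reflexivity.
Qed.

Lemma stopped_at_iff x0 n xi : x0 <> w ->
  stopped_at eqd x0 w n xi <->
  hd_error xi = Some x0 /\ (exists B, xi = B ++ [w]) /\ count_occ eqd xi w = n.
Proof.
  intros Hx. split.
  - intros [t [-> [Hl Hc]]]. repeat split.
    + destruct t as [|y t'] using rev_ind; [simpl in Hl; congruence|].
      rewrite last_last in Hl. subst y. exists (x0 :: t'). reflexivity.
    + simpl. destruct (eqd x0 w); [congruence|exact Hc].
  - intros [Hhd [[B EB] Hc]]. destruct xi as [|x t]; [discriminate|].
    injection Hhd as ->. exists t. repeat split.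
    + destruct B as [|b B']; simpl in EB; injection EB as E1 E2; [congruence|].
      rewrite E2, last_last. reflexivity.
    + simpl in Hc. destruct (eqd x0 w); [congruence|exact Hc].
Qed.

Lemma path_weight_nonneg (P : St -> St -> R) : (forall x y, 0 <= P x y) ->
  forall l, 0 <= path_weight P l.
Proof.
  intros HP l. induction l as [|x [|y l] IH]; simpl in *; [lra|lra|].
  apply Rmult_le_pos; auto.
Qed.

Lemma excursions_weight_nonneg (P : St -> St -> R) : (forall x y, 0 <= P x y) ->
  forall es, 0 <= excursions_weight w P es.
Proof.
  intros HP es. induction es; cbn [excursions_weight]; [lra|].
  apply Rmult_le_pos; auto. apply path_weight_nonneg; auto.
Qed.

Lemma splice_mass (P : St -> St -> R) x0 (Hx0 : x0 <> w) N (HN : (1 <= N)%nat)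
  (Q : list St -> Prop) m :
  mass (prod_weight (path_weight P) (excursions_weight w P))
    (prod_set (fun xi => stopped_at eqd x0 w 1 xi /\ Q (loop_erasure eqd xi))
              (fun es => length es = (N - 1)%nat /\ Forall (wseg w) es)) m <->
  mass (path_weight P) (fun xi => stopped_at eqd x0 w N xi /\ Q (loop_erasure eqd xi)) m.
Proof.
  assert (Hfirst : forall xi, stopped_at eqd x0 w 1 xi <-> wseg w xi /\ hd_error xi = Some x0).
  { intros xi. rewrite stopped_at_iff by auto. split.
    - intros [Hhd [Hend Hc]]. split; [apply wseg_of_count|]; auto.
    - intros [Hs Hhd]. repeat split; auto; [|apply count_wseg; auto].
      destruct Hs as [a [-> _]]; eauto. }
  assert (Hcount : forall xi es, wseg w xi -> Forall (wseg w) es ->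
            count_occ eqd (splice eqd w xi es) w = S (length es)).
  { intros xi es Hs Hes.
    rewrite (proj1 (Permutation_count_occ eqd _ _) (splice_perm eqd w xi es Hs) w).
    rewrite count_occ_app, count_wseg, count_concat by auto. reflexivity. }
  apply (mass_transport _ _ _ _ (fun p => splice eqd w (fst p) (snd p))).
  - intros [xi es] [[H1 HQ] [Hlen Hes]]; simpl in *. apply Hfirst in H1. destruct H1 as [Hs Hhd].
    rewrite loop_erasure_splice by auto. split; auto.
    apply stopped_at_iff; auto. repeat split.
    + rewrite splice_head; auto.
    + apply splice_ends; auto.
    + rewrite Hcount by auto. lia.
  - intros xi [HN' HQ]. apply stopped_at_iff in HN'; auto. destruct HN' as [Hhd [Hend Hc]].
    destruct (splice_surj eqd w xi Hend) as [xi1 [es [Hs [Hes [Hhd1 <-]]]]].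
    exists (xi1, es). simpl. rewrite loop_erasure_splice in HQ by auto.
    rewrite Hcount in Hc by auto. repeat split; auto.
    + apply Hfirst; simpl; split; [exact Hs|congruence].
    + simpl; lia.
  - intros [xi es] [xi' es'] [[H1 _] [_ Hes]] [[H1' _] [_ Hes']] E; simpl in *.
    apply Hfirst in H1, H1'.
    destruct (splice_inj eqd w xi xi' es es' (proj1 H1) (proj1 H1') Hes Hes' E) as [-> ->].
    reflexivity.
  - intros [xi es] [[H1 _] [_ Hes]]; simpl in *. apply Hfirst in H1.
    unfold prod_weight; simpl. apply (splice_weight eqd w P xi es (proj1 H1) Hes []).
Qed.

End Visits.

Theorem mainTheorem18
  (St : Type) (eqd : forall x y : St, {x = y} + {x <> y})
  (Hcount : exists f : St -> nat, forall x y, f x = f y -> x = y)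
  (P : St -> St -> R)
  (HP0 : forall x y, 0 <= P x y)
  (HP1 : forall x (l : list St), NoDup l -> sumR (map (P x) l) <= 1)
  (x0 w : St) (Hw : w <> x0) (N : nat) (HN : (1 <= N)%nat)
  (pN p1 : R)
  (HpN : has_mass P (stopped_at eqd x0 w N) pN)
  (Hp1 : has_mass P (stopped_at eqd x0 w 1) p1)
  (Hpos : 0 < pN) :
  forall (gamma : list St) (qN q1 : R),
    has_mass P (fun xi => stopped_at eqd x0 w N xi /\ loop_erasure eqd xi = gamma) qN ->
    has_mass P (fun xi => stopped_at eqd x0 w 1 xi /\ loop_erasure eqd xi = gamma) q1 ->
    qN / pN = q1 / p1.
Proof.
  intros gamma qN q1 HqN Hq1.
  assert (Hx0 : x0 <> w) by congruence.
  pose proof (list_eq_dec eqd) as eq1. pose proof (list_eq_dec eq1) as eq2.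
  pose proof (path_weight_nonneg P HP0) as Hw1.
  pose proof (excursions_weight_nonneg w P HP0) as Hw2.
  assert (Hp1' : mass (path_weight P) (fun xi => stopped_at eqd x0 w 1 xi /\ True) p1)
    by (apply (mass_ext _ (stopped_at eqd x0 w 1)); [tauto|exact Hp1]).
  assert (HpN' : mass (path_weight P) (fun xi => stopped_at eqd x0 w N xi /\ True) pN)
    by (apply (mass_ext _ (stopped_at eqd x0 w N)); [tauto|exact HpN]).
  apply (splice_mass eqd w P x0 Hx0 N HN (fun _ => True)) in HpN'.
  apply (splice_mass eqd w P x0 Hx0 N HN (fun l => l = gamma)) in HqN.
  (* both factor through the mass [E] of the (N-1)-tuples of excursions *)
  assert (Hp1pos : 0 < p1)
    by exact (mass_factor_pos eq1 eq2 _ _ _ _ Hw1 Hw2 _ _ Hp1' HpN' Hpos).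
  destruct (mass_factor_exists _ _ _ _ Hw2 _ _ Hp1' Hp1pos HpN') as [E HE].
  assert (EpN : pN = p1 * E) by (eapply is_lub_u; [exact HpN'|apply mass_product; auto]).
  assert (EqN : qN = q1 * E) by (eapply is_lub_u; [exact HqN|apply mass_product; auto]).
  assert (HE0 : E <> 0) by (intros ->; lra).
  rewrite EpN, EqN. field. split; lra.
Qed.
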